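(* Let $\varphi$ be an $N$-function with right derivative $p=\varphi'_+$. Then for every $f\in\mathcal M_{\varphi,w}$ with $f\neq0$, $$\bar k^{**}(f)=\sup\Big\{k>0:\rho_{\varphi_*,w}\Big(p\Big(\tfrac{k(f^* )^0}{w}\Big)\Big)\le1\Big\}<\infty .$$
   Context: Let $I=[0,\gamma)$, $0<\gamma\le\infty$, Lebesgue measure $m$, $L_0$ the measurable functions on $I$, $f^*$ the decreasing rearrangement of $f$. Orlicz function: convex $\varphi:[0,\infty)\to[0,\infty)$, $\varphi(0)=0$, $\varphi(u)>0$ for $u>0$; $N$-function: additionally $\lim_{u\to0}\varphi(u)/u=0$ and $\lim_{u\to\infty}\varphi(u)/u=\infty$. Complementary function $\varphi_*(v)=\sup_{u>0}(uv-\varphi(u))$. Weight: positive decreasing locally integrable $w$ on $I$, $W(t)=\int_0^tw$, $W(\infty)=\infty$ if $\gamma=\infty$. Orlicz–Lorentz modular $\rho_{\psi,w}(g)=\int_I\psi(g^* )w$. Halperin level function $g^0$ of $g\ge0$ w.r.t. $w$: with $G(a,b)=\int_a^bg$, $W(a,b)=\int_a^bw$, $(a,b]$ is a level interval if $G(a,t)/W(a,t)\le G(a,b)/W(a,b)$ for all $t\in(a,b]$, maximal if not contained in another; $g^0=\frac{G(a,b)}{W(a,b)}w$ on each maximal level interval and $g^0=g$ elsewhere. $Q_{\varphi,w}(f)=\int_I\varphi((f^* )^0/w)w$ and $\mathcal M_{\varphi,w}=\{f:Q_{\varphi,w}(kf)<\infty\text{ for some }k>0\}$. *)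

From HB Require Import structures.
From mathcomp Require Import all_boot all_order all_algebra.
From mathcomp Require Import all_classical all_reals all_analysis.
Set Implicit Arguments. Unset Strict Implicit. Unset Printing Implicit Defensive.
Import Order.TTheory GRing.Theory Num.Theory numFieldNormedType.Exports.
Local Open Scope classical_set_scope.
Local Open Scope ring_scope.

Section Defs.
Variable R : realType.
Local Notation mu := (@lebesgue_measure R).

Definition Iset (gam : \bar R) : set R := [set x | 0 <= x /\ (x%:E < gam)%E].

(* Orlicz function (only values on [0,oo) matter) *)
Definition is_Orlicz (phi : R -> R) : Prop :=
  [/\ forall x y t, 0 <= x -> 0 <= y -> 0 <= t <= 1 ->
        phi (t * x + (1 - t) * y) <= t * phi x + (1 - t) * phi y,
      phi 0 = 0 &
      forall u, 0 < u -> 0 < phi u].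

Definition is_Nfunction (phi : R -> R) : Prop :=
  [/\ is_Orlicz phi,
      (phi u / u @[u --> 0^'+] --> 0) &
      (phi u / u @[u --> +oo] --> +oo)].

Definition phistar (phi : R -> R) (v : R) : R :=
  sup [set u * v - phi u | u in [set u : R | 0 < u]].

Definition rderiv (phi : R -> R) (u : R) : R :=
  lim ((phi (u + h) - phi u) / h @[h --> 0^'+]).

Definition extE (F : R -> R) (x : \bar R) : \bar R :=
  if x is r%:E then (F r)%:E else +oo%E.

Definition is_weight (gam : \bar R) (w : R -> R) : Prop :=
  [/\ forall x, Iset gam x -> 0 < w x,
      forall x y, Iset gam x -> Iset gam y -> x <= y -> w y <= w x,
      forall t, Iset gam t -> mu.-integrable `[0, t] (EFin \o w) &
      gam = +oo%E -> (\int[mu]_(x in Iset gam) (w x)%:E = +oo)%E].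

Definition distrib (gam : \bar R) (h : R -> \bar R) (s : R) : \bar R :=
  mu [set x | Iset gam x /\ (s%:E < `|h x|)%E].

Definition drearr (gam : \bar R) (h : R -> \bar R) (t : R) : \bar R :=
  ereal_inf [set s%:E | s in [set s : R | 0 <= s /\ (distrib gam h s <= t%:E)%E]].

Definition Gint (g : R -> \bar R) (a b : R) : \bar R :=
  (\int[mu]_(x in `]a, b]) g x)%E.

Definition Wint (w : R -> R) (a b : R) : R :=
  fine (\int[mu]_(x in `]a, b]) (w x)%:E)%E.

Definition ratio (w : R -> R) (g : R -> \bar R) (a b : R) : \bar R :=
  (Gint g a b * ((Wint w a b)^-1)%:E)%E.

(* (a,b] is a level interval; (a,b] is a subinterval of I up to the endpoint
   b = gam when gam is finite *)
Definition level_int (gam : \bar R) (w : R -> R) (g : R -> \bar R) (a b : R) : Prop :=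
  [/\ 0 <= a, a < b, (b%:E <= gam)%E &
      forall t, a < t <= b -> (ratio w g a t <= ratio w g a b)%E].

Definition maximal_level_int gam w g (a b : R) : Prop :=
  level_int gam w g a b /\
  forall a' b', level_int gam w g a' b' -> `]a, b] `<=` `]a', b'] ->
    a' = a /\ b' = b.

Definition level_fun (gam : \bar R) (w : R -> R) (g : R -> \bar R) (x : R) : \bar R :=
  match pselect (exists ab : R * R,
           maximal_level_int gam w g ab.1 ab.2 /\ ab.1 < x <= ab.2) with
  | left H => let ab := projT1 (cid H) in (ratio w g ab.1 ab.2 * (w x)%:E)%E
  | right _ => g x
  end.

Definition Qfun (phi : R -> R) (gam : \bar R) (w : R -> R) (f : R -> R) : \bar R :=
  (\int[mu]_(x in Iset gam)
     (extE phi (level_fun gam w (drearr gam (EFin \o f)) x * ((w x)^-1)%:E)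
      * (w x)%:E))%E.

Definition inM (phi : R -> R) (gam : \bar R) (w : R -> R) (f : R -> R) : Prop :=
  exists k : R, 0 < k /\ (Qfun phi gam w (fun x => (k * f x)%R) < +oo)%E.

Definition rhoOL (psi : R -> R) (gam : \bar R) (w : R -> R) (h : R -> \bar R) : \bar R :=
  (\int[mu]_(x in Iset gam) (extE psi (drearr gam h x) * (w x)%:E))%E.

Definition kbarss (phi : R -> R) (gam : \bar R) (w : R -> R) (f : R -> R) : \bar R :=
  ereal_sup [set k%:E | k in [set k : R | 0 < k /\
    (rhoOL (phistar phi) gam w
       (fun x => extE (rderiv phi)
          (k%:E * level_fun gam w (drearr gam (EFin \o f)) x * ((w x)^-1)%:E)%E)
     <= 1)%E]].

End Defs.

From Pilot Require Import Defs.
From HB Require Import structures.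
From mathcomp Require Import all_boot all_order all_algebra.
From mathcomp Require Import all_classical all_reals all_analysis.
From mathcomp Require Import ring lra measurable_realfun.
Import Order.TTheory GRing.Theory Num.Theory numFieldNormedType.Exports.
Local Open Scope classical_set_scope.
Local Open Scope ring_scope.

(* Since f is not a.e. zero, f^* >= eps on some [0, m), and then the level
   function satisfies (f^* )^0 / w >= c := eps / w(0) on [0, m).  For an
   Orlicz function p(u) >= phi(u) / u, which is nondecreasing, so
   h := p(k (f^* )^0 / w) >= A := phi(kc) / (kc) on [0, m), hence h^* >= A on
   [0, m) as well.  With phi_*(v) >= v - phi(1) this gives
   rho_{phi_*,w}(h) >= (A - phi(1)) w(m) m, and A -> oo as k -> oo because phi
   is an N-function; so rho_{phi_*,w}(h) <= 1 forces k to stay bounded. *)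

Section Orlicz.
Context {R : realType} {phi : R -> R}.
Hypothesis phiO : is_Orlicz phi.

Lemma Orlicz_ge0 u : 0 <= u -> 0 <= phi u.
Proof.
case: phiO => _ phi0 phi_gt0; rewrite le_eqVlt => /predU1P[<-|/phi_gt0/ltW//].
by rewrite phi0.
Qed.

Lemma Orlicz_ratio_le s r : 0 < s -> s <= r -> phi s / s <= phi r / r.
Proof.
case: phiO => convex phi0 _ s0 sr; have r0 : 0 < r := lt_le_trans s0 sr.
have sr01 : 0 <= s / r <= 1.
  by apply/andP; split; [rewrite divr_ge0 ?ltW|rewrite ler_pdivrMr// mul1r].
have := convex r 0 (s / r) (ltW r0) (lexx 0) sr01.
rewrite mulr0 addr0 phi0 mulr0 addr0 divfK ?gt_eqF// => phis_le.
by rewrite ler_pdivrMr// mulrC mulrA mulrAC.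
Qed.

Lemma Orlicz_ratio_le_slope u h : 0 < u -> 0 < h ->
  phi u / u <= (phi (u + h) - phi u) / h.
Proof.
move=> u0 h0; have uh0 : 0 < u + h by rewrite addr_gt0.
have := @Orlicz_ratio_le u (u + h) u0 (ler_wpDr (ltW h0) (lexx u)).
rewrite ler_pdivlMr// mulrDr divfK ?gt_eqF// => le_uh.
by rewrite ler_pdivlMr// lerBrDl.
Qed.

Lemma Orlicz_slope_nondecreasing u : 0 <= u ->
  {in `]0, +oo[ &, nondecreasing_fun (fun h => (phi (u + h) - phi u) / h)}.
Proof.
case: phiO => convex _ _ u0 h1 h2; rewrite !in_itv/= !andbT => h10 h20 h12.
have h01 : 0 <= h1 / h2 <= 1.
  by apply/andP; split; [rewrite divr_ge0 ?ltW|rewrite ler_pdivrMr// mul1r].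
have := convex (u + h2) u (h1 / h2) (addr_ge0 u0 (ltW h20)) u0 h01.
have -> : h1 / h2 * (u + h2) + (1 - h1 / h2) * u = u + h1.
  by field; rewrite gt_eqF.
move=> phi_uh1; rewrite ler_pdivrMr//.
have -> : (phi (u + h2) - phi u) / h2 * h1 =
    h1 / h2 * phi (u + h2) + (1 - h1 / h2) * phi u - phi u.
  by field; rewrite gt_eqF.
by rewrite lerD2r.
Qed.

Lemma Orlicz_ratio_le_rderiv u : 0 < u -> phi u / u <= rderiv phi u.
Proof.
move=> u0; rewrite /rderiv; set Q := fun h => _.
have Q_ge h : h \in `]0, +oo[ -> phi u / u <= Q h.
  by rewrite in_itv/= andbT; exact: Orlicz_ratio_le_slope.
have Q_lb : has_lbound (Q @` [set` `]0, +oo[]).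
  by exists (phi u / u) => _ [h /Q_ge ? <-].
rewrite (cvg_lim _ (nondecreasing_at_right_cvgr _
  (Orlicz_slope_nondecreasing _ (ltW u0)) Q_lb))//.
apply: lb_le_inf; first by exists (Q 1), 1 => //=; rewrite in_itv/= andbT.
by move=> _ [h /Q_ge ? <-].
Qed.

Lemma extE_rderiv_ge r (y : \bar R) : 0 < r -> (r%:E <= y)%E ->
  ((phi r / r)%:E <= extE (rderiv phi) y)%E.
Proof.
move=> r0; case: y => [s|_|]/=; [|exact: leey|by rewrite leeNy_eq].
rewrite !lee_fin => rs; apply: le_trans (Orlicz_ratio_le_rderiv _ (lt_le_trans r0 rs)).
exact: Orlicz_ratio_le.
Qed.

End Orlicz.

Section NFunction.
Context {R : realType} {phi : R -> R}.
Hypothesis phiN : is_Nfunction phi.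

Lemma Nfunction_ratio_large M : exists U, forall u, U <= u -> M < phi u / u.
Proof.
case: phiN => [_ _ /cvgryPgt /(_ M) [N [_ N_lt]]].
by exists (N + 1) => u Nu; apply: N_lt; apply: lt_le_trans Nu; rewrite ltrDl.
Qed.

Lemma phistar_ubound v : 0 <= v ->
  has_ubound [set u * v - phi u | u in [set u : R | 0 < u]].
Proof.
case: phiN => phiO _ /cvgryPgt /(_ v) [M [_ M_lt]] v0.
exists (Num.max M 0 * v) => _ [u /= u0 <-].
have [uM|Mu] := leP u (Num.max M 0).
  by have := Orlicz_ge0 phiO _ (ltW u0); have := ler_wpM2r v0 uM; lra.
have /M_lt : M < u by apply: le_lt_trans Mu; rewrite le_max lexx.
rewrite ltr_pdivlMr// => vu_lt.
have : 0 <= Num.max M 0 * v by rewrite mulr_ge0// le_max lexx orbT.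
by rewrite [v * u]mulrC in vu_lt; lra.
Qed.

Lemma phistar_ge_sub v : 0 <= v -> v - phi 1 <= phistar phi v.
Proof.
move=> v0; have := ub_le_sup (phistar_ubound _ v0); apply.
by exists 1 => //=; rewrite mul1r.
Qed.

(* u v - phi(u) >= - phi(u), and phi(u) is o(u) at 0^+. *)
Lemma phistar_ge0 v : 0 <= v -> 0 <= phistar phi v.
Proof.
move=> v0; case: phiN => _ phi_o _; rewrite leNgt; apply/negP => phistar_lt0.
have near0 : \forall t \near 0^'+, [/\ phi t / t < 1, 0 < t & t < - phistar phi v].
  near=> t; split; near: t.
  - exact: (cvgr_lt 0 phi_o 1 ltr01).
  - exact: nbhs_right_gt.
  - by apply: nbhs_right_lt; rewrite oppr_gt0.
have [|u [phiu_lt u0 u_lt]] := filter_ex near0; first exact: at_right_proper_filter.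
have : u * v - phi u <= phistar phi v.
  by apply: (ub_le_sup (phistar_ubound _ v0)); exists u.
move: phiu_lt; rewrite ltr_pdivrMr// mul1r => phiu_lt.
by have := mulr_ge0 (ltW u0) v0; lra.
Unshelve. all: by end_near.
Qed.

End NFunction.

(* Level functions and rearrangements are not known to be measurable, so
   integrals and measures are only compared through their sup/inf definitions. *)
Lemma ge0_le_integral_nonmeas d (T : measurableType d) (R : realType)
    (mu : {measure set T -> \bar R}) (D : set T) (f1 f2 : T -> \bar R) :
  (forall x, D x -> 0 <= f1 x)%E -> (forall x, D x -> f1 x <= f2 x)%E ->
  (\int[mu]_(x in D) f1 x <= \int[mu]_(x in D) f2 x)%E.
Proof.
move=> f10 f12.
have f20 x : D x -> (0 <= f2 x)%E by move=> Dx; exact: le_trans (f10 _ Dx) (f12 _ Dx).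
rewrite !ge0_integralE//; apply: ereal_sup_le => _ [h /= hf <-]; exists h => //= x.
apply: le_trans (hf x) _; rewrite /patch; case: ifP => // /[!inE] Dx; exact: f12.
Qed.

Lemma gt0_exists_lt_fin {R : realType} {y : \bar R} :
  (0 < y)%E -> exists m, 0 < m /\ (m%:E < y)%E.
Proof.
case: y => [r||]//=; last by move=> _; exists 1; split => //; exact: ltry.
rewrite lte_fin => r0; exists (r / 2); split; first by rewrite divr_gt0.
by rewrite lte_fin; lra.
Qed.

Section Rearrangement.
Context {R : realType}.
Local Notation mu := (@lebesgue_measure R).
Local Open Scope ereal_scope.

Lemma le_lebesgue_measure (A B : set R) : A `<=` B -> mu A <= mu B.
Proof. exact: (le_mu_ext (wlength (@idfun R))). Qed.

Lemma integral_cst_itv (s t : bool) (c a b : R) : (a < b)%R ->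
  \int[mu]_(y in [set` Interval (BSide s a) (BSide t b)]) c%:E = (c * (b - a))%:E.
Proof.
move=> ab; rewrite integral_cst// EFinM; congr (_ * _).
have := lebesgue_measure_itv (Interval (BSide s a) (BSide t b)).
by rewrite /= lte_fin ab -EFinD.
Qed.

Lemma Iset_measurable (gam : \bar R) : measurable (Iset gam).
Proof.
case: gam => [r||].
- rewrite (_ : Iset r%:E = `[0%R, r[%classic); first exact: measurable_itv.
  apply/seteqP; split => x /=; rewrite in_itv/=; first by case=> -> /=; rewrite -lte_fin.
  by case/andP => x0 xr; split => //; rewrite lte_fin.
- rewrite (_ : Iset +oo = `[0%R, +oo[%classic); first exact: measurable_itv.
  apply/seteqP; split => x /=; rewrite in_itv/= andbT; first by case.
  by move=> x0; split => //; exact: ltry.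
- rewrite (_ : Iset -oo = set0); first exact: measurable0.
  by apply/seteqP; split => x //= [_]; rewrite ltNge leNye.
Qed.

Lemma drearr_ge0 (gam : \bar R) h t : 0 <= drearr gam h t.
Proof. by apply: le_ereal_inf_tmp => _ [s [s0 _] <-]; rewrite lee_fin. Qed.

Lemma drearr_ge (gam : \bar R) h (A t : R) :
  (forall s, (0 <= s)%R -> (s < A)%R -> t%:E < distrib gam h s) ->
  A%:E <= drearr gam h t.
Proof.
move=> distrib_gt; apply: le_ereal_inf_tmp => _ [s [s0 ds] <-]; rewrite lee_fin.
by rewrite leNgt; apply/negP => /(distrib_gt s s0); rewrite ltNge ds.
Qed.

Lemma drearr_ge_on (gam : \bar R) h (A m : R) : m%:E <= gam ->
  (forall x, (0 <= x)%R -> (x < m)%R -> A%:E <= h x) ->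
  forall t, (0 <= t)%R -> (t < m)%R -> A%:E <= drearr gam h t.
Proof.
move=> mg h_ge t t0 tm; apply: drearr_ge => s s0 sA.
have m0 : (0 < m)%R := le_lt_trans t0 tm.
apply: (@lt_le_trans _ _ (mu `[0%R, m[%classic)).
  by rewrite lebesgue_measure_itv/= lte_fin m0 sube0 lte_fin.
apply: le_lebesgue_measure => x; rewrite /= in_itv/= => /andP[x0 xm]; split.
  by split => //; apply: lt_le_trans mg; rewrite lte_fin.
apply: (@lt_le_trans _ _ A%:E); first by rewrite lte_fin.
exact: le_trans (h_ge _ x0 xm) (lee_abs _).
Qed.

Lemma distrib_gt0 {gam : \bar R} {f : R -> R} : measurable_fun (Iset gam) f ->
  ~ {ae mu, forall x, Iset gam x -> f x = 0%R} ->
  exists eps, (0 < eps)%R /\ 0 < distrib gam (EFin \o f) eps.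
Proof.
move=> mf; apply: contra_notP => distrib0.
pose E (n : nat) := [set x | Iset gam x /\ ((n.+1%:R)^-1)%:E < `|(f x)%:E|].
have mE n : measurable (E n).
  have -> : E n = Iset gam `&` (f @^-1` ((@Num.norm _ R) @^-1` `](n.+1%:R^-1)%R, +oo[)).
    by apply/seteqP; split => x; rewrite /E /= in_itv/= andbT lte_fin.
  apply: mf; first exact: Iset_measurable.
  by rewrite -[_ @^-1` _]setTI; exact: normr_measurable.
have E0 n : mu (E n) = 0.
  apply/eqP; rewrite eq_le measure_ge0 andbT leNgt; apply/negP => pos.
  by apply: distrib0; exists (n.+1%:R^-1)%R; split; [rewrite invr_gt0|exact: pos].
have : mu.-negligible (\bigcup_n E n).
  by apply: negligible_bigcup => k; exists (E k); split => //; [exact: mE|exact: E0].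
apply: negligibleS => x /= /not_implyP [Ix fx0].
have fx : (0 < `|f x|)%R by rewrite normr_gt0; apply/eqP.
exists (Num.truncn (`|f x|^-1)) => //; split => //=; rewrite lte_fin.
rewrite -[ltRHS]invrK ltf_pV2 ?posrE ?invr_gt0//; exact: truncnS_gt.
Qed.

Lemma drearr_ge_near0 {gam : \bar R} {f : R -> R} : 0 < gam ->
  measurable_fun (Iset gam) f -> ~ {ae mu, forall x, Iset gam x -> f x = 0%R} ->
  exists eps m, [/\ (0 < eps)%R, (0 < m)%R, m%:E < gam &
    forall t, (0 <= t)%R -> (t < m)%R -> eps%:E <= drearr gam (EFin \o f) t].
Proof.
move=> gam0 mf f_neq0.
have [eps [eps0 /gt0_exists_lt_fin[m1 [m10 m1d]]]] := distrib_gt0 mf f_neq0.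
have [m2 [m20 m2g]] := gt0_exists_lt_fin gam0.
exists eps, (Num.min m1 m2); split.
- exact: eps0.
- by rewrite lt_min m10 m20.
- by apply: le_lt_trans m2g; rewrite lee_fin ge_min lexx orbT.
move=> t t0 tm; apply: drearr_ge => s s0 s_lt.
apply: (@lt_le_trans _ _ (distrib gam (EFin \o f) eps)).
  by apply: lt_trans m1d; rewrite lte_fin (lt_le_trans tm)// ge_min lexx.
apply: le_lebesgue_measure => x [Ix ex]; split => //.
by apply: lt_trans ex; rewrite lte_fin.
Qed.

End Rearrangement.

Section Weight.
Context {R : realType} {gam : \bar R} {w : R -> R}.
Hypothesis w_weight : is_weight gam w.
Local Notation mu := (@lebesgue_measure R).

Let w_gt0 {x} : Iset gam x -> 0 < w x.
Proof. by case: w_weight => + _ _ _; apply. Qed.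

Let w_decr {x y} : Iset gam x -> Iset gam y -> x <= y -> w y <= w x.
Proof. by case: w_weight => _ + _ _; apply. Qed.

Lemma integral_weight_oc_bounds a x : 0 <= a -> a < x -> (x%:E < gam)%E ->
  ((w x * (x - a))%:E <= \int[mu]_(y in `]a, x]) (w y)%:E <= (w 0 * (x - a))%:E)%E.
Proof.
move=> a0 ax xg.
have I_oc y : a < y <= x -> Iset gam y.
  move=> /andP[ay yx]; split; first by rewrite (le_trans a0)// ltW.
  by apply: le_lt_trans xg; rewrite lee_fin.
have Ix : Iset gam x by apply: I_oc; rewrite ax lexx.
have I0 : Iset gam 0.
  by split => //; apply: le_lt_trans xg; rewrite lee_fin (le_trans a0)// ltW.
rewrite -!(integral_cst_itv false false)//.
apply/andP; split; apply: ge0_le_integral_nonmeas.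
- by move=> y _; rewrite lee_fin ltW// w_gt0.
- move=> y; rewrite /= in_itv/= => /[dup] /I_oc Iy /andP[_ yx].
  by rewrite lee_fin w_decr.
- by move=> y; rewrite /= in_itv/= => /I_oc/w_gt0/ltW; rewrite lee_fin.
- move=> y; rewrite /= in_itv/= => /[dup] /I_oc Iy /andP[ay _].
  by rewrite lee_fin w_decr// (le_trans a0)// ltW.
Qed.

Lemma Wint_gt0_le a x : 0 <= a -> a < x -> (x%:E < gam)%E ->
  0 < Wint w a x <= w 0 * (x - a).
Proof.
move=> a0 ax xg; have Ix : Iset gam x.
  by split; [rewrite (le_trans a0)// ltW|].
move: (integral_weight_oc_bounds a x a0 ax xg); rewrite /Wint.
case: (\int[mu]_(y in _) _)%E => [W||]//=; last by move=> /andP[_]; rewrite leye_eq.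
rewrite !lee_fin => /andP[lb ->].
by rewrite andbT (lt_le_trans _ lb)// mulr_gt0 ?w_gt0 ?subr_gt0.
Qed.

Lemma ratio_ge g a x eps : 0 <= a -> a < x -> (x%:E < gam)%E -> 0 < eps ->
  (forall t, a < t <= x -> (eps%:E <= g t)%E) ->
  ((eps / w 0)%:E <= Defs.ratio w g a x)%E.
Proof.
move=> a0 ax xg eps0 g_ge; have /andP[W0 W_le] := Wint_gt0_le a x a0 ax xg.
have G_ge : ((eps * (x - a))%:E <= Gint g a x)%E.
  rewrite -(integral_cst_itv false false)//; apply: ge0_le_integral_nonmeas.
    by move=> t _; rewrite lee_fin ltW.
  by move=> t; rewrite /= in_itv/=; exact: g_ge.
apply: (@le_trans _ _ ((eps * (x - a))%:E * ((Wint w a x)^-1)%:E)%E); last first.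
  by apply: lee_wpmul2r => //; rewrite lee_fin invr_ge0 ltW.
have w00 : 0 < w 0.
  apply: w_gt0; split => //.
  by apply: le_lt_trans xg; rewrite lee_fin (le_trans a0)// ltW.
rewrite -EFinM lee_fin ler_pdivrMr// mulrAC ler_pdivlMr// -mulrA.
by rewrite ler_wpM2l ?(ltW eps0)// mulrC.
Qed.

(* On a maximal level interval (a, b] containing x, the level property at t = x
   bounds the constant value ratio(a, b) from below by ratio(a, x). *)
Lemma level_fun_ge g x m eps : 0 <= x -> x < m -> (m%:E < gam)%E -> 0 < eps ->
  (forall t, 0 <= t -> t < m -> (eps%:E <= g t)%E) ->
  ((eps / w 0)%:E <= level_fun gam w g x * ((w x)^-1)%:E)%E.
Proof.
move=> x0 xm mg eps0 g_ge.
have xg : (x%:E < gam)%E by apply: lt_trans mg; rewrite lte_fin.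
have Ix : Iset gam x by split.
have wx := w_gt0 Ix.
rewrite /level_fun; case: pselect => [ab_ex|_].
  have [[[a0 ab _ level] _] /andP[ax xb]] := projT2 (cid ab_ex).
  rewrite -muleA -EFinM mulfV ?gt_eqF// mule1.
  apply: le_trans (level x _); last by rewrite ax.
  apply: ratio_ge => // t /andP[ta tx]; apply: g_ge; first by rewrite (le_trans a0)// ltW.
  exact: le_lt_trans xm.
have I0 : Iset gam 0 by split => //; apply: le_lt_trans xg; rewrite lee_fin.
rewrite EFinM; apply: lee_pmul.
- by rewrite lee_fin ltW.
- by rewrite lee_fin invr_ge0 ltW// w_gt0.
- exact: g_ge.
- by rewrite lee_fin lef_pV2 ?posrE ?w_gt0//; apply: w_decr.
Qed.

Lemma rhoOL_phistar_ge phi h m A : is_Nfunction phi -> 0 < m -> (m%:E < gam)%E ->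
  phi 1 <= A -> (forall t, 0 <= t -> t < m -> (A%:E <= drearr gam h t)%E) ->
  (((A - phi 1) * (w m * m))%:E <= rhoOL (phistar phi) gam w h)%E.
Proof.
move=> phiN m0 mg A_ge h_ge.
have Im : Iset gam m by split => //; exact: ltW.
pose c := (A - phi 1) * w m.
have c0 : 0 <= c by rewrite mulr_ge0 ?subr_ge0// ltW// w_gt0.
pose S : set R := `[0%R, m[%classic.
have SI : S `<=` Iset gam.
  move=> x; rewrite /S /= in_itv/= => /andP[x0 xm]; split => //.
  by apply: lt_trans mg; rewrite lte_fin.
have F_ge0 x : Iset gam x -> (0 <= extE (phistar phi) (drearr gam h x) * (w x)%:E)%E.
  move=> /w_gt0 wx; have := drearr_ge0 gam h x.
  case: (drearr gam h x) => [r||]//; last by move=> _ /=; rewrite gt0_mulye ?lte_fin.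
  by rewrite !lee_fin => r0 /=; rewrite mulr_ge0 ?phistar_ge0// ltW.
rewrite /rhoOL; apply: (@le_trans _ _ (\int[mu]_(x in Iset gam) ((cst c%:E) \_ S) x)%E).
  by rewrite -integral_mkcondr setIidr// integral_cst_itv// subr0 mulrA.
apply: ge0_le_integral_nonmeas.
  by move=> x _; rewrite /patch; case: ifP; rewrite // lee_fin.
move=> x Ix; rewrite /patch; case: ifP => [/[!inE] Sx|_]; last exact: F_ge0.
have wx := w_gt0 Ix; move: Sx; rewrite /S /= in_itv/= => /andP[x0 xm].
have := h_ge x x0 xm; case: (drearr gam h x) => [r||]//; last first.
  by move=> _ /=; rewrite gt0_mulye ?lte_fin// leey.
rewrite lee_fin => A_le /=; rewrite -EFinM lee_fin /c.
have [phiO _ _] := phiN.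
have r0 : 0 <= r by apply: le_trans A_le; apply: le_trans A_ge; exact: Orlicz_ge0.
apply: ler_pM.
- by rewrite subr_ge0.
- exact: ltW (w_gt0 Im).
- by apply: le_trans (phistar_ge_sub phiN r r0); rewrite lerD2r.
- by apply: w_decr => //; exact: ltW.
Qed.

Lemma rhoOL_rderiv_level_ge {phi g k c m} : is_Nfunction phi ->
  0 < k -> 0 < c -> 0 < m -> (m%:E < gam)%E ->
  (forall x, 0 <= x -> x < m -> (c%:E <= level_fun gam w g x * ((w x)^-1)%:E)%E) ->
  phi 1 <= phi (k * c) / (k * c) ->
  (((phi (k * c) / (k * c) - phi 1) * (w m * m))%:E <=
   rhoOL (phistar phi) gam w
     (fun x => extE (rderiv phi) (k%:E * level_fun gam w g x * ((w x)^-1)%:E)))%E.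
Proof.
move=> phiN k0 c0 m0 mg level_ge ratio_ge1; have [phiO _ _] := phiN.
apply: rhoOL_phistar_ge => //; apply: drearr_ge_on; first exact: ltW.
move=> x x0 xm; apply: (extE_rderiv_ge phiO (k * c)); first by rewrite mulr_gt0.
by rewrite -muleA EFinM; apply: lee_wpmul2l; [rewrite lee_fin ltW|exact: level_ge].
Qed.

End Weight.

Theorem mainTheorem14 (R : realType) (gam : \bar R) (w phi f : R -> R) :
  (0 < gam)%E ->
  is_weight gam w ->
  is_Nfunction phi ->
  measurable_fun (Iset gam) f ->
  inM phi gam w f ->
  ~ {ae @lebesgue_measure R, forall x, Iset gam x -> f x = 0} ->
  (kbarss phi gam w f < +oo)%E.
Proof.
move=> gam0 w_weight phiN mf _ f_neq0.
have [eps [m [eps0 m0 mg f_ge]]] := drearr_ge_near0 gam0 mf f_neq0.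
have [w_gt0 _ _ _] := w_weight.
have w00 : 0 < w 0 by apply: w_gt0; split => //; apply: lt_trans mg; rewrite lte_fin.
have wm0 : 0 < w m by apply: w_gt0; split => //; exact: ltW.
pose c := eps / w 0; have c0 : 0 < c by rewrite divr_gt0.
pose g := drearr gam (EFin \o f).
have level_ge x : 0 <= x -> x < m -> (c%:E <= level_fun gam w g x * ((w x)^-1)%:E)%E.
  by move=> x0 xm; exact: level_fun_ge w_weight _ _ _ _ x0 xm mg eps0 f_ge.
pose beta := w m * m; have beta0 : 0 < beta by rewrite mulr_gt0.
have [U U_large] := Nfunction_ratio_large phiN (phi 1 + beta^-1).
apply: (@le_lt_trans _ _ (U / c)%:E); last exact: ltry.
apply: ge_ereal_sup => _ [k [k0 rho_le1] <-]; rewrite lee_fin leNgt; apply/negP => Uk.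
have /U_large ratio_gt : U <= k * c by rewrite -ler_pdivrMr// ltW.
have ratio_ge1 : phi 1 <= phi (k * c) / (k * c).
  by apply: ltW; apply: le_lt_trans ratio_gt; rewrite lerDl invr_ge0 ltW.
have := rhoOL_rderiv_level_ge w_weight phiN k0 c0 m0 mg level_ge ratio_ge1.
move=> /le_trans /(_ rho_le1); rewrite lee_fin leNgt => /negP; apply.
by rewrite -[X in X < _](mulVf (lt0r_neq0 beta0)) ltr_pM2r// ltrBrDl.
Qed.
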